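(* Let $b\in L^1_{\mathrm{loc}}(\mathbb{R}^n)$. Suppose there is a constant $C_b$ such that every $h^1$ atom $a$ satisfies $$\Big|\int ab\Big|\le\min\Big\{C_b,\ \frac{C_b\log 2}{\log(1+r^{-1})}\Big\},$$ where $r$ is the radius of the ball containing the support of $a$. Then $b\in\mathrm{lmo}(\mathbb{R}^n)$, with $\|b\|_{\mathrm{lmo}}\lesssim C_b$.
   Context: An $h^1$ atom: a function $a$ supported in a ball $B(x_0,r)$ with $\|a\|_{L^2}\le|B(x_0,r)|^{-1/2}$ and $|\int a|\le[\log(1+r^{-1})]^{-1}$. For a ball $B$, $b_B=\frac1{|B|}\int_Bb$. $\mathrm{LMO}_{\mathrm{loc}}$: $b\in L^1_{\mathrm{loc}}$ with $\|b\|_{\mathrm{LMO}_{\mathrm{loc}}}:=\sup_{r(B)<1}\frac{\log(1+r(B)^{-1})}{|B|}\int_B|b-b_B|<\infty$. $\mathrm{lmo}(\mathbb{R}^n)$ is the set of $b$ with $\|b\|_{\mathrm{lmo}}:=\|b\|_{\mathrm{LMO}_{\mathrm{loc}}}+\sup_{r(B)\ge1}\frac1{|B|}\int_B|b|<\infty$ (this equals $\mathrm{LMO}_{\mathrm{loc}}\cap\mathrm{bmo}$). *)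

From HB Require Import structures.
From mathcomp Require Import all_boot all_order all_algebra.
From mathcomp Require Import all_classical all_reals all_analysis.
Set Implicit Arguments. Unset Strict Implicit. Unset Printing Implicit Defensive.
Import Order.TTheory GRing.Theory Num.Theory.
Import numFieldNormedType.Exports.
Local Open Scope classical_set_scope.
Local Open Scope ring_scope.

(* Euclidean space R^(n.+1), built as the iterated product
   (((R * R) * R) * ... * R) with n.+1 factors, carrying the iterated
   product sigma-algebra of the Borel sets of R. *)
Fixpoint Rsp (R : realType) (n : nat) : {d : measure_display & measurableType d} :=
  match n with
  | 0 => existT (fun d => measurableType d) _ (measurableTypeR R : measurableType _)
  | m.+1 => existT (fun d => measurableType d) _
              (((projT2 (Rsp R m)) * (measurableTypeR R))%type : measurableType _)
  end.

Definition Rn (R : realType) (n : nat) : measurableType (projT1 (Rsp R n)) :=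
  projT2 (Rsp R n).

Fixpoint leb (R : realType) (n : nat) : set (Rn R n) -> \bar R :=
  match n return set (Rn R n) -> \bar R with
  | 0 => @lebesgue_measure R
  | m.+1 => (@leb R m \x @lebesgue_measure R)%E
  end.

Fixpoint dist2 (R : realType) (n : nat) : Rn R n -> Rn R n -> R :=
  match n return Rn R n -> Rn R n -> R with
  | 0 => fun x y => (x - y) ^+ 2
  | m.+1 => fun x y => @dist2 R m x.1 y.1 + (x.2 - y.2) ^+ 2
  end.

Definition eball (R : realType) (n : nat) (x : Rn R n) (r : R) : set (Rn R n) :=
  [set y | Num.sqrt (dist2 x y) < r].

Definition vol (R : realType) (n : nat) (B : set (Rn R n)) : R := fine (@leb R n B).

Definition avg (R : realType) (n : nat) (B : set (Rn R n)) (b : Rn R n -> R) : R :=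
  fine (\int[@leb R n]_(y in B) (b y)%:E)%E / vol B.

Definition loc_integrable_Rn (R : realType) (n : nat) (b : Rn R n -> R) : Prop :=
  forall (x : Rn R n) (r : R), 0 < r -> (@leb R n).-integrable (eball x r) (EFin \o b).

Definition h1_atom (R : realType) (n : nat) (a : Rn R n -> R) (x0 : Rn R n) (r : R) : Prop :=
  [/\ 0 < r,
      measurable_fun setT a,
      (forall y, ~ eball x0 r y -> a y = 0),
      (* ||a||_{L^2} <= |B|^{-1/2}, i.e. ||a||_{L^2}^2 <= |B|^{-1} *)
      (\int[@leb R n]_y ((a y) ^+ 2)%:E <= ((vol (eball x0 r))^-1)%:E)%E &
      `| fine (\int[@leb R n]_y (a y)%:E)%E | <= (ln (1 + r^-1))^-1 ].

Definition lmo_norm (R : realType) (n : nat) (b : Rn R n -> R) : \bar R :=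
  (ereal_sup [set ((ln (1 + r^-1) / vol (eball x r)) *
                   fine (\int[@leb R n]_(y in eball x r) `|b y - avg (eball x r) b|%:E)%E)%:E
             | x in [set: Rn R n] & r in [set r : R | (0 < r < 1)%R]]
   + ereal_sup [set ((vol (eball x r))^-1 *
                   fine (\int[@leb R n]_(y in eball x r) `|b y|%:E)%E)%:E
             | x in [set: Rn R n] & r in [set r : R | (1 <= r)%R]])%E.

From HB Require Import structures.
From mathcomp Require Import all_boot all_order all_algebra.
From mathcomp Require Import all_classical all_reals all_analysis.
From mathcomp Require Import measurable_realfun.
From mathcomp.algebra_tactics Require Import ring lra.
Import Order.TTheory GRing.Theory Num.Theory.
Import numFieldNormedType.Exports.
Local Open Scope classical_set_scope.
Local Open Scope ring_scope.
Set Implicit Arguments. Unset Strict Implicit. Unset Printing Implicit Defensive.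

(* Fix a ball B of measure V > 0 on which b is integrable.  For any measurable
   g with |g| <= 1 the "test function" a = g/V on B (and 0 outside) satisfies
   the L^2 normalisation int a^2 <= 1/V of an atom supported in B.
   - Large balls (r >= 1): ln(1 + 1/r) <= 1, so with g = sign b the test
     function is an atom, and int a b = (1/V) int_B |b| <= Cb.
   - Small balls (r < 1): with c the mean of b on B, f = sign (b - c) and
     m the mean of f, the choice g = (f - m)/2 has mean zero, so the test
     function is an atom whatever r is, and int a b = (1/2V) int_B |b - c|;
     the bound Cb ln 2 / ln(1 + 1/r) gives the LMO_loc estimate 2 ln 2 Cb. *)

Section test_functions.
Context d (T : measurableType d) (R : realType) (mu : {measure set T -> \bar R}).

Lemma bounded_of_norm_le (A : set T) (g : T -> R) (K : R) :
  (forall y, `|g y| <= K) -> [bounded g y | y in A].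
Proof.
move=> gK; exists K; split; first exact: num_real.
by move=> M KM y _; apply: le_trans (gK y) (ltW KM).
Qed.

Lemma bounded_mul_integrable (D : set T) (g f : T -> R) (K : R) :
  measurable D -> measurable_fun D g -> (forall y, `|g y| <= K) ->
  mu.-integrable D (EFin \o f) -> mu.-integrable D (fun y => (g y * f y)%:E).
Proof.
move=> mD mg gK fi.
have := integrableMr mD mg (bounded_of_norm_le D gK) fi.
by apply: (eq_integrable mD) => y _ /=; rewrite EFinM.
Qed.

Lemma integrable_scale (D : set T) (h : T -> R) (k : R) : measurable D ->
  mu.-integrable D (EFin \o h) -> mu.-integrable D (EFin \o (fun y => k * h y)).
Proof.
by move=> mD hi; apply: eq_integrable (integrableZl mD k hi) => // y _ /=; rewrite EFinM.
Qed.

Lemma integrable_add (D : set T) (h1 h2 : T -> R) : measurable D ->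
  mu.-integrable D (EFin \o h1) -> mu.-integrable D (EFin \o h2) ->
  mu.-integrable D (EFin \o (fun y => h1 y + h2 y)).
Proof.
by move=> mD i1 i2; apply: eq_integrable (integrableD mD i1 i2) => // y _ /=; rewrite EFinD.
Qed.

Lemma fine_measure_eq0_or_gt0 (A : set T) : fine (mu A) = 0 \/ 0 < fine (mu A).
Proof.
have := fine_ge0 (measure_ge0 mu A).
by rewrite le_eqVlt => /predU1P[<-|]; [left|right].
Qed.

Variables (B : set T) (mB : measurable B).
Let V := fine (mu B).
Hypothesis V_gt0 : 0 < V.

Let Vinv_ge0 : 0 <= V^-1.
Proof. by rewrite invr_ge0 ltW. Qed.

Lemma measure_finE : mu B = V%:E.
Proof.
move: V_gt0; rewrite /V; have := measure_ge0 mu B.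
by case: (mu B) => [x| |] //=; rewrite ltxx.
Qed.

Lemma bounded_integrable (g : T -> R) (K : R) : measurable_fun B g ->
  (forall y, `|g y| <= K) -> mu.-integrable B (EFin \o g).
Proof.
move=> mg gK; apply: measurable_bounded_integrable => //.
  by rewrite measure_finE ltry.
exact: bounded_of_norm_le gK.
Qed.

Lemma Rintegral_bounded (g : T -> R) (K : R) : measurable_fun B g ->
  (forall y, `|g y| <= K) -> `|Rintegral mu B g| <= K * V.
Proof.
move=> mg gK.
apply: (le_trans (le_normr_Rintegral mB (bounded_integrable mg gK))).
rewrite -Rintegral_cst //; apply: le_Rintegral => //.
- apply: (bounded_integrable (K := K)); last by move=> y; rewrite normr_id.
  exact: (measurableT_comp (@normr_measurable R setT) mg).
- apply: (bounded_integrable (K := `|K|)) => //; exact: measurable_cst.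
Qed.

Definition ball_test (g : T -> R) : T -> R := (fun y => g y / V) \_ B.

Section ball_test.
Variables (g : T -> R) (mg : measurable_fun setT g) (g_le1 : forall y, `|g y| <= 1).

Let mgV : measurable_fun B (fun y => g y / V).
Proof. exact: measurable_funM (measurable_funTS mg) (measurable_cst _). Qed.

Let gV_le y : `|g y / V| <= V^-1.
Proof. by rewrite normrM (ger0_norm Vinv_ge0); exact: ler_piMl. Qed.

Lemma measurable_ball_test : measurable_fun setT (ball_test g).
Proof. exact/(measurable_restrictT _ mB). Qed.

Lemma ball_test_supp y : ~ B y -> ball_test g y = 0.
Proof. by move=> By; rewrite /ball_test /patch; case: ifPn => // /set_mem. Qed.

Lemma ball_test_L2 : (\int[mu]_y ((ball_test g y) ^+ 2)%:E <= (V^-1)%:E)%E.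
Proof.
have -> : (fun y => ((ball_test g y) ^+ 2)%:E) = (fun y => ((g y / V) ^+ 2)%:E) \_ B.
  by apply/funext => y; rewrite /ball_test /patch; case: ifPn; rewrite ?expr0n.
rewrite -integral_mkcond.
apply: (@le_trans _ _ (\int[mu]_(y in B) (cst (V^-1 ^+ 2)%:E) y)%E).
  apply: ge0_le_integral => //.
  - by move=> y _; rewrite lee_fin sqr_ge0.
  - by apply/measurable_EFinP; exact: measurable_funX mgV.
  - move=> y _; rewrite lee_fin -real_normK ?num_real //.
    by rewrite lerXn2r ?nnegrE // gV_le.
rewrite integral_cst // measure_finE -EFinM lee_fin.
by rewrite expr2 -mulrA mulVf ?mulr1 ?gt_eqF.
Qed.

Lemma ball_test_mul_integrable (b : T -> R) : mu.-integrable B (EFin \o b) ->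
  mu.-integrable setT (fun y => (ball_test g y * b y)%:E).
Proof.
move=> bi.
have -> : (fun y => (ball_test g y * b y)%:E) = (fun y => (g y / V * b y)%:E) \_ B.
  by apply/funext => y; rewrite /ball_test /patch; case: ifPn => //; rewrite mul0r.
exact/(integrable_mkcond _ mB)/(bounded_mul_integrable mB mgV gV_le).
Qed.

Lemma Rintegral_ball_test : Rintegral mu setT (ball_test g) = Rintegral mu B (fun y => g y / V).
Proof. by rewrite [RHS]Rintegral_mkcond. Qed.

Lemma Rintegral_ball_test_mul (b : T -> R) :
  Rintegral mu setT (fun y => ball_test g y * b y) = Rintegral mu B (fun y => g y / V * b y).
Proof.
rewrite [RHS]Rintegral_mkcond; congr Rintegral; apply/funext => y.
by rewrite /ball_test /patch; case: ifPn => //; rewrite mul0r.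
Qed.

End ball_test.

Variables (b : T -> R) (bi : mu.-integrable B (EFin \o b)).

Let mb : measurable_fun B b.
Proof. exact/measurable_EFinP/(measurable_int mu bi). Qed.

Definition sign_above (c : R) (y : T) : R :=
  (\1_(B `&` [set z | c <= b z]) y : R) * 2 - 1.

Lemma measurable_sign_above c : measurable_fun setT (sign_above c).
Proof.
have mS : measurable (B `&` [set z | c <= b z]).
  have -> : B `&` [set z | c <= b z] = B `&` b @^-1` `[c, +oo[.
    by apply/seteqP; split => y [By /=]; rewrite ?in_itv /= ?andbT.
  exact: mb.
apply: measurable_funB; last exact: measurable_cst.
by apply: measurable_funM; [exact: measurable_indic|exact: measurable_cst].
Qed.

Lemma sign_above_le1 c y : `|sign_above c y| <= 1.
Proof.
by rewrite /sign_above indicE; case: (_ \in _); rewrite /= ?mulr1n ?mulr0n;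
  rewrite ler_norml; apply/andP; split; lra.
Qed.

Lemma sign_aboveE c y : B y -> sign_above c y * (b y - c) = `|b y - c|.
Proof.
move=> By; rewrite /sign_above indicE.
have [cb|bc] := leP c (b y).
  rewrite mem_set //= ger0_norm ?subr_ge0 //; ring.
have -> : y \in B `&` [set z | c <= b z] = false.
  by apply/negbTE/negP; rewrite in_setE => -[_ /=]; rewrite leNgt bc.
rewrite /= ltr0_norm ?subr_lt0 //; ring.
Qed.

Let sign_integrable c : mu.-integrable B (EFin \o sign_above c).
Proof.
exact: bounded_integrable (measurable_funTS (measurable_sign_above c)) (sign_above_le1 c).
Qed.

Definition mean (h : T -> R) : R := Rintegral mu B h / V.

Lemma mean_le1 (h : T -> R) : measurable_fun B h -> (forall y, `|h y| <= 1) ->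
  `|mean h| <= 1.
Proof.
move=> mh h1; rewrite /mean normrM (ger0_norm Vinv_ge0) ler_pdivrMr // mul1r.
by have := Rintegral_bounded mh h1; rewrite mul1r.
Qed.

(* The sign of b - mean b, centred to have mean zero and halved to stay in [-1, 1]. *)
Definition centred_sign (y : T) : R :=
  (sign_above (mean b) y - mean (sign_above (mean b))) / 2.

Lemma measurable_centred_sign : measurable_fun setT centred_sign.
Proof.
apply: measurable_funM; last exact: measurable_cst.
by apply: measurable_funB; [exact: measurable_sign_above|exact: measurable_cst].
Qed.

Lemma centred_sign_le1 y : `|centred_sign y| <= 1.
Proof.
have m1 := mean_le1 (measurable_funTS (measurable_sign_above (mean b)))
                    (sign_above_le1 (mean b)).
rewrite normrM (ger0_norm (_ : (0 : R) <= 2^-1)) ?invr_ge0 // ler_pdivrMr // mul1r.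
by apply: (le_trans (ler_normB _ _)); have := sign_above_le1 (mean b) y; lra.
Qed.

(* The centred sign has mean zero, so its test function is an atom of any radius. *)
Lemma centred_sign_mean0 : Rintegral mu B (fun y => centred_sign y / V) = 0.
Proof.
set f := sign_above (mean b); set k := (2 * V)^-1.
have -> : Rintegral mu B (fun y => centred_sign y / V) =
    Rintegral mu B (fun y => k * f y - k * mean f).
  by apply: eq_Rintegral => y _; rewrite /centred_sign -/f /k invfM; ring.
rewrite RintegralB //; last 2 first.
- exact: integrable_scale k mB (sign_integrable _).
- by apply: (bounded_integrable (K := `|k * mean f|)) => //; exact: measurable_cst.
rewrite RintegralZl //; last exact: sign_integrable.
by rewrite Rintegral_cst // /mean -/V; field; rewrite gt_eqF.
Qed.

Lemma centred_sign_pairing :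
  Rintegral mu B (fun y => centred_sign y / V * b y) =
  Rintegral mu B (fun y => `|b y - mean b|) / (2 * V).
Proof.
set c := mean b; set f := sign_above c; set m := mean f; set k := (2 * V)^-1.
have -> : Rintegral mu B (fun y => centred_sign y / V * b y) =
    Rintegral mu B (fun y => k * `|b y - c| + (k * c) * f y - (k * m) * b y).
  apply: eq_Rintegral => y /set_mem By.
  by rewrite -(sign_aboveE c By) /centred_sign -/c -/f -/m /k invfM; ring.
have ci : mu.-integrable B (EFin \o (fun _ : T => c)).
  by apply: (bounded_integrable (K := `|c|)) => //; exact: measurable_cst.
have bci : mu.-integrable B (EFin \o (fun y => `|b y - c|)).
  by apply: integrable_norm; apply: eq_integrable (integrableB mB bi ci) => // y _ /=.
have fi := sign_integrable c.
have i1 := integrable_scale k mB bci.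
have i2 := integrable_scale (k * c) mB fi.
have i3 := integrable_scale (k * m) mB bi.
rewrite RintegralB ?RintegralD ?RintegralZl //; last exact: integrable_add.
have intf : Rintegral mu B f = m * V by rewrite /m /mean divfK ?gt_eqF.
have intb : Rintegral mu B b = c * V by rewrite /c /mean divfK ?gt_eqF.
by rewrite intf intb /k; ring.
Qed.

Variables (K M : R).
Hypothesis atom_dual : forall a : T -> R, measurable_fun setT a ->
  (forall y, ~ B y -> a y = 0) ->
  (\int[mu]_y ((a y) ^+ 2)%:E <= (V^-1)%:E)%E ->
  `|Rintegral mu setT a| <= K ->
  mu.-integrable setT (fun y => (a y * b y)%:E) ->
  `|Rintegral mu setT (fun y => a y * b y)| <= M.

(* Testing with sign b: the mean of |b| on B is at most M, provided K >= 1. *)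
Lemma mean_abs_le : 1 <= K -> mean (fun y => `|b y|) <= M.
Proof.
move=> K_ge1; set f := sign_above 0.
have mf := measurable_sign_above 0; have f1 := sign_above_le1 0.
have fi := sign_integrable 0.
have mean_f : `|Rintegral mu B (fun y => f y / V)| <= K.
  apply: le_trans K_ge1.
  by rewrite RintegralZr //; exact: mean_le1 (measurable_funTS mf) f1.
have := atom_dual (measurable_ball_test mf) (@ball_test_supp f) (ball_test_L2 mf f1).
rewrite Rintegral_ball_test Rintegral_ball_test_mul.
move=> /(_ mean_f (ball_test_mul_integrable mf f1 bi)); apply: le_trans.
have -> : Rintegral mu B (fun y => f y / V * b y) = mean (fun y => `|b y|).
  rewrite /mean -RintegralZr //; last exact: integrable_norm.
  apply: eq_Rintegral => y /set_mem By.
  by rewrite -(subr0 (b y)) -(sign_aboveE 0 By) /f subr0; ring.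
by rewrite ger0_norm // divr_ge0 ?Rintegral_ge0 // ltW.
Qed.

(* Testing with the centred sign: half the mean oscillation of b on B is at
   most M, for any K >= 0. *)
Lemma mean_osc_le : 0 <= K -> Rintegral mu B (fun y => `|b y - mean b|) / (2 * V) <= M.
Proof.
move=> K_ge0; have mg := measurable_centred_sign; have g1 := centred_sign_le1.
have := atom_dual (measurable_ball_test mg) (@ball_test_supp _) (ball_test_L2 mg g1).
rewrite Rintegral_ball_test Rintegral_ball_test_mul centred_sign_mean0 normr0.
move=> /(_ K_ge0 (ball_test_mul_integrable mg g1 bi)); apply: le_trans.
by rewrite centred_sign_pairing ger0_norm // divr_ge0 ?Rintegral_ge0 // mulr_ge0 // ltW.
Qed.

End test_functions.

Fixpoint lebM (R : realType) (n : nat) : {measure set (Rn R n) -> \bar R} :=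
  match n return {measure set (Rn R n) -> \bar R} with
  | 0 => @lebesgue_measure R
  | m.+1 => ((@lebM R m) \x (@lebesgue_measure R))%E
  end.

Lemma lebME (R : realType) (n : nat) : @leb R n = @lebM R n.
Proof. by elim: n => [//|m /= ->]. Qed.

Lemma measurable_dist2 (R : realType) (n : nat) (x : Rn R n) :
  measurable_fun setT (@dist2 R n x).
Proof.
elim: n x => [|m IH] x /=; first exact/measurable_funX/measurable_funB.
apply: (measurable_funD (f := fun y : Rn R m.+1 => dist2 x.1 y.1)
                       (g := fun y : Rn R m.+1 => (x.2 - y.2) ^+ 2)).
  exact: measurableT_comp (IH x.1) measurable_fst.
apply: (measurableT_comp (f := fun t : R => (x.2 - t) ^+ 2) (g := snd));
  last exact: measurable_snd.
exact/measurable_funX/measurable_funB.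
Qed.

Lemma measurable_eball (R : realType) (n : nat) (x : Rn R n) (r : R) :
  measurable (eball x r).
Proof.
have -> : eball x r = (fun y => Num.sqrt (dist2 x y)) @^-1` `]-oo, r[.
  by apply/seteqP; split => y /=; rewrite in_itv.
rewrite -[X in measurable X]setTI.
apply: (measurableT_comp _ (measurable_dist2 x)) => //.
exact: continuous_measurable_fun (@sqrt_continuous R).
Qed.

Lemma ln1Dinv_gt0 (R : realType) (r : R) : 0 < r -> 0 < ln (1 + r^-1).
Proof. by move=> r0; apply: ln_gt0; rewrite ltrDl invr_gt0. Qed.

Lemma ln1Dinv_le1 (R : realType) (r : R) : 1 <= r -> ln (1 + r^-1) <= 1.
Proof.
move=> r1; have r0 : 0 < r by apply: lt_le_trans r1.
apply: (le_trans (le_ln1Dx _)); last by rewrite invf_le1.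
by apply: (lt_le_trans (_ : -1 < 0)); [lra|rewrite invr_ge0 ltW].
Qed.

Section atom_duality_on_Rn.
Variables (R : realType) (n : nat) (b : Rn R n -> R) (Cb : R).
Hypothesis b_loc : loc_integrable_Rn b.
Hypothesis atom_bound : forall (a : Rn R n -> R) (x0 : Rn R n) (r : R),
  h1_atom a x0 r ->
  (@leb R n).-integrable setT (fun y => (a y * b y)%:E) ->
  `| fine (\int[@leb R n]_y (a y * b y)%:E)%E |
    <= Num.min Cb (Cb * ln 2 / ln (1 + r^-1)).

Lemma atom_bound_ball (x : Rn R n) (r : R) (a : Rn R n -> R) : 0 < r ->
  measurable_fun setT a -> (forall y, ~ eball x r y -> a y = 0) ->
  (\int[lebM R n]_y ((a y) ^+ 2)%:E <= ((fine (lebM R n (eball x r)))^-1)%:E)%E ->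
  `|Rintegral (lebM R n) setT a| <= (ln (1 + r^-1))^-1 ->
  (lebM R n).-integrable setT (fun y => (a y * b y)%:E) ->
  `|Rintegral (lebM R n) setT (fun y => a y * b y)|
    <= Num.min Cb (Cb * ln 2 / ln (1 + r^-1)).
Proof.
move=> r0 ma supp L2 mean ab; move: atom_bound; rewrite /h1_atom /vol lebME.
by move=> bound; exact: bound (And5 r0 ma supp L2 mean) ab.
Qed.

(* Testing the zero atom shows that the constant is nonnegative. *)
Lemma atom_constant_ge0 : 0 <= Cb.
Proof.
have := @atom_bound_ball point 1 (fun _ => 0) ltr01 (measurable_cst _) (fun _ _ => erefl).
rewrite /Rintegral !integral0_eq => [|y _|y _|y _]; rewrite ?mul0r ?expr0n //=.
rewrite normr0 le_min => bound.
have zero_L2 : (0 <= ((fine (lebM R n (eball point 1)))^-1)%:E)%E.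
  by rewrite lee_fin invr_ge0 fine_ge0 ?measure_ge0.
have zero_mean : (0 : R) <= (ln (1 + 1^-1))^-1 by rewrite invr_ge0 ltW ?ln1Dinv_gt0.
have zero_int : (lebM R n).-integrable setT (fun y => (0 * b y)%:E).
  apply: (eq_integrable measurableT (cst 0%E)) => [y _|]; first by rewrite /= mul0r.
  exact: integrable0.
by case/andP: (bound zero_L2 zero_mean zero_int).
Qed.

Lemma small_ball_oscillation (x : Rn R n) (r : R) : 0 < r < 1 ->
  ln (1 + r^-1) / vol (eball x r) *
    fine (\int[@leb R n]_(y in eball x r) `|b y - avg (eball x r) b|%:E)%E
  <= 2 * ln 2 * Cb.
Proof.
move=> /andP[r0 _]; rewrite /avg /vol lebME.
have ln2 : 0 < ln (2 : R) by apply: ln_gt0; lra.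
have L0 := ln1Dinv_gt0 r0.
have bi := b_loc x r0; rewrite lebME in bi.
have [->|V0] := fine_measure_eq0_or_gt0 (lebM R n) (eball x r).
  by rewrite invr0 mulr0 mul0r !mulr_ge0 ?atom_constant_ge0 // ltW.
set L := ln _; set V := fine _; set X := fine _.
have osc : X / (2 * V) <= Cb * ln 2 / L.
  apply: (mean_osc_le (measurable_eball x r) V0 bi (K := L^-1)); last first.
    by rewrite invr_ge0 ltW.
  move=> a ma supp L2 mean ab.
  apply: le_trans (atom_bound_ball r0 ma supp L2 mean ab) _.
  by rewrite ge_min lexx orbT.
have -> : L / V * X = 2 * L * (X / (2 * V)) by field; rewrite gt_eqF.
have -> : 2 * ln 2 * Cb = 2 * L * (Cb * ln 2 / L) by field; rewrite gt_eqF.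
by rewrite ler_wpM2l // mulr_ge0 // ltW.
Qed.

Lemma large_ball_mean (x : Rn R n) (r : R) : 1 <= r ->
  (vol (eball x r))^-1 * fine (\int[@leb R n]_(y in eball x r) `|b y|%:E)%E <= Cb.
Proof.
move=> r1; rewrite /vol lebME.
have r0 : 0 < r by apply: lt_le_trans r1.
have bi := b_loc x r0; rewrite lebME in bi.
have [->|V0] := fine_measure_eq0_or_gt0 (lebM R n) (eball x r).
  by rewrite invr0 mul0r atom_constant_ge0.
rewrite mulrC; apply: (mean_abs_le (measurable_eball x r) V0 bi (K := (ln (1 + r^-1))^-1)).
  move=> a ma supp L2 mean ab.
  by apply: le_trans (atom_bound_ball r0 ma supp L2 mean ab) _; rewrite ge_min lexx.
by rewrite invf_ge1 ?ln1Dinv_gt0 ?ln1Dinv_le1.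
Qed.

End atom_duality_on_Rn.

(* The ambient space is R^(n.+1) (dimension n.+1 >= 1). *)
Theorem mainTheorem10 (R : realType) (n : nat) :
  exists C : R, 0 < C /\
  forall (b : Rn R n -> R) (Cb : R),
    loc_integrable_Rn b ->
    (forall (a : Rn R n -> R) (x0 : Rn R n) (r : R),
        h1_atom a x0 r ->
        (@leb R n).-integrable setT (fun y => (a y * b y)%:E) ->
        `| fine (\int[@leb R n]_y (a y * b y)%:E)%E |
          <= Num.min Cb (Cb * ln 2 / ln (1 + r^-1))) ->
    (lmo_norm b <= (C * Cb)%:E)%E.
Proof.
have ln2 : 0 < ln (2 : R) by apply: ln_gt0; lra.
exists (1 + 2 * ln 2); split; first lra.
move=> b Cb b_loc atom_bound.
have -> : (1 + 2 * ln 2) * Cb = 2 * ln 2 * Cb + Cb by ring.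
rewrite /lmo_norm EFinD; apply: leeD.
- apply: ge_ereal_sup => _ [x _ [r /= r01 <-]].
  by rewrite lee_fin; exact: small_ball_oscillation.
- apply: ge_ereal_sup => _ [x _ [r /= r1 <-]].
  by rewrite lee_fin; exact: large_ball_mean.
Qed.
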